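(* Let $c>0$ satisfy $\cosh^2(\tfrac12)+4c^2\sinh^2(\tfrac12)>e^2$. Define $$A^{(1)}=\begin{bmatrix}-1 & c\\ \tfrac{1}{4c} & -1\end{bmatrix},\qquad A^{(2)}=\begin{bmatrix}-1 & \tfrac{1}{4c}\\ c & -1\end{bmatrix},$$ and the $2$-periodic piecewise constant matrix function $A:\mathbb{R}\to\mathbb{R}^{2\times2}$ by $A(t)=A^{(1)}$ for $t\in[2k,2k+1)$ and $A(t)=A^{(2)}$ for $t\in[2k+1,2k+2)$, $k\in\mathbb{Z}$. Then for every $t\in\mathbb{R}$ the matrix $A(t)$ has positive off-diagonal entries and eigenvalues $-\tfrac12$ (its larger, principal eigenvalue) and $-\tfrac32$. Moreover, the matrix $P=e^{A^{(2)}}e^{A^{(1)}}$ has all entries positive and its larger eigenvalue $\mu$ satisfies $\mu>1$; if $w$ is an eigenvector of $P$ for $\mu$ with positive coordinates, then the solution $x(t)$ of $x'=A(t)x$ with $x(0)=w$ satisfies $x(2n)=\mu^n w$ for all $n=1,2,\dots$, so $\|x(2n)\|\to\infty$ as $n\to\infty$.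
   Context: A solution of $x'=A(t)x$ for this piecewise constant $A$ is a continuous function $\xi:\mathbb{R}\to\mathbb{R}^2$ such that $\xi'(t)=A^{(1)}\xi(t)$ for $t\in(2k,2k+1)$ and $\xi'(t)=A^{(2)}\xi(t)$ for $t\in(2k+1,2k+2)$, $k\in\mathbb{Z}$ (with the corresponding one-sided derivatives at integers); for each initial value at time $0$ there is a unique such solution. $\|\cdot\|$ denotes the Euclidean norm on $\mathbb{R}^2$. *)

From HB Require Import structures.
From mathcomp Require Import all_boot all_order all_algebra.
From mathcomp Require Import all_classical all_reals all_analysis.
Set Implicit Arguments. Unset Strict Implicit. Unset Printing Implicit Defensive.
Import Order.TTheory GRing.Theory Num.Theory.
Import numFieldNormedType.Exports.
Local Open Scope classical_set_scope.
Local Open Scope ring_scope.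

Definition cosh {R : realType} (x : R) : R := (expR x + expR (- x)) / 2.
Definition sinh {R : realType} (x : R) : R := (expR x - expR (- x)) / 2.

Definition expmx {R : realType} (n : nat) (M : 'M[R]_n) : 'M[R]_n :=
  limn (series (fun k : nat => (k`!%:R)^-1 *: M ^+ k)).

Definition A1 {R : realType} (c : R) : 'M[R]_2 :=
  \matrix_(i < 2, j < 2)
    if (i == 0) && (j == 0) then -1
    else if (i == 0) && (j == 1) then c
    else if (i == 1) && (j == 0) then (4 * c)^-1
    else -1.

Definition A2 {R : realType} (c : R) : 'M[R]_2 :=
  \matrix_(i < 2, j < 2)
    if (i == 0) && (j == 0) then -1
    else if (i == 0) && (j == 1) then (4 * c)^-1
    else if (i == 1) && (j == 0) then c
    else -1.

Definition Apw {R : realType} (c : R) (t : R) : 'M[R]_2 :=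
  if ((Num.floor t %% 2)%Z == 0) then A1 c else A2 c.

(* Solution of x' = A(t) x in the sense of the paper: continuous, derivative
   A(t) x(t) at non-integer t, and one-sided derivatives at integers k
   given by the matrix on the adjacent interval. *)
Definition is_solution {R : realType} (c : R) (xi : R -> 'cV[R]_2) : Prop :=
  continuous xi /\
  (forall t : R, (forall k : int, t != k%:~R) ->
     derivable xi t 1 /\ 'D_1 xi t = Apw c t *m xi t) /\
  (forall k : int,
     (fun h : R => h^-1 *: (xi (k%:~R + h) - xi k%:~R)) @ at_right 0
        --> Apw c k%:~R *m xi k%:~R) /\
  (forall k : int,
     (fun h : R => h^-1 *: (xi (k%:~R + h) - xi k%:~R)) @ at_left 0
        --> Apw c (k%:~R - 1) *m xi k%:~R).

Definition eucl2 {R : realType} (v : 'cV[R]_2) : R :=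
  Num.sqrt (v 0 0 ^+ 2 + v 1 0 ^+ 2).

(* A2 c = A1 (1/(4c)), and A1 d = -1/2 E + -3/2 (1 - E) for an idempotent E.
   This gives the eigenvalues, the closed form
   exp (A1 d) = e^-1 [[cosh h, 2d sinh h], [sinh h / 2d, cosh h]] (h = 1/2),
   and, since the rows of E and 1 - E are left eigenvectors, the flow of
   x' = A1 d x over a unit interval is exp (A1 d).  Hence x(2n+2) = P x(2n)
   for the positive matrix P = exp A2 exp A1, whose (1,1) entry is
   e^-2 (cosh^2 h + 4 c^2 sinh^2 h) > 1.  The Perron root of a 2x2 matrix with
   nonnegative off-diagonal product dominates the diagonal, so mu > 1 and
   x(2n) = mu^n w grows geometrically. *)

From HB Require Import structures.
From mathcomp Require Import all_boot all_order all_algebra.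
From mathcomp Require Import all_classical all_reals all_analysis.
From mathcomp Require Import ring lra.
Import Order.TTheory GRing.Theory Num.Theory.
Import numFieldNormedType.Exports.
Local Open Scope classical_set_scope.
Local Open Scope ring_scope.

Definition mx2 {R : Type} (a b c d : R) : 'M[R]_2 :=
  \matrix_(i < 2, j < 2) if i == 0 then (if j == 0 then a else b)
                         else (if j == 0 then c else d).

Lemma ord2P (i : 'I_2) : i = 0 \/ i = 1.
Proof. by case: i => [[|[|//]] ?]; [left|right]; apply/val_inj. Qed.

Lemma mx2P {R : Type} (M N : 'M[R]_2) :
  M 0 0 = N 0 0 -> M 0 1 = N 0 1 -> M 1 0 = N 1 0 -> M 1 1 = N 1 1 -> M = N.
Proof.
move=> e00 e01 e10 e11; apply/matrixP => i j.
by case: (ord2P i) => ->; case: (ord2P j) => ->.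
Qed.

Lemma mulmx2E {R : pzSemiRingType} (M N : 'M[R]_2) i j :
  (M *m N) i j = M i 0 * N 0 j + M i 1 * N 1 j.
Proof.
rewrite mxE !big_ord_recl big_ord0 addr0.
by have -> : lift ord0 ord0 = 1 :> 'I_2 by apply/val_inj.
Qed.

Lemma mulmx_mx2 {R : pzSemiRingType} (a b c d a' b' c' d' : R) :
  mx2 a b c d *m mx2 a' b' c' d' =
  mx2 (a * a' + b * c') (a * b' + b * d') (c * a' + d * c') (c * b' + d * d').
Proof. by apply: mx2P; rewrite mulmx2E !mxE. Qed.

Lemma det_mx2 {R : comPzRingType} (M : 'M[R]_2) :
  \det M = M 0 0 * M 1 1 - M 0 1 * M 1 0.
Proof.
rewrite (expand_det_row _ 0) !big_ord_recl big_ord0 /cofactor !det_mx11 !mxE /=.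
have l0 : lift 0 (0 : 'I_1) = 1 :> 'I_2 by apply/val_inj.
have l1 : lift 1 (0 : 'I_1) = 0 :> 'I_2 by apply/val_inj.
by rewrite l0 l1 /=; ring.
Qed.

Lemma eigenvalue_mx2 {F : fieldType} (M : 'M[F]_2) a :
  eigenvalue M a = ((M 0 0 - a) * (M 1 1 - a) == M 0 1 * M 1 0).
Proof.
have -> : eigenvalue M a = (\det (M - a%:M) == 0).
  apply/eigenvalueP/det0P => [[v hv vn0] | [v vn0 hv]]; exists v => //.
    by rewrite mulmxBr hv mul_mx_scalar subrr.
  by apply/eqP; rewrite -mul_mx_scalar -subr_eq0 -mulmxBr hv.
by rewrite det_mx2 !mxE /= subr_eq0 !subr0.
Qed.

Section Perron2.
Context {R : rcfType}.
Implicit Types (M : 'M[R]_2) (a : R).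

Let disc M := (M 0 0 - M 1 1) ^+ 2 + 4 * (M 0 1 * M 1 0).

Definition perron2 M := (M 0 0 + M 1 1 + Num.sqrt (disc M)) / 2.

Context {M : 'M[R]_2}.
Hypothesis offdiag_ge0 : 0 <= M 0 1 * M 1 0.

Let sqrt_disc : Num.sqrt (disc M) ^+ 2 = disc M.
Proof. by rewrite sqr_sqrtr // addr_ge0 ?sqr_ge0 // mulr_ge0. Qed.

Lemma char_mx2_factor a :
  (M 0 0 - a) * (M 1 1 - a) - M 0 1 * M 1 0 =
  (a - perron2 M) * (a - (M 0 0 + M 1 1 - Num.sqrt (disc M)) / 2).
Proof.
have := sqrt_disc; rewrite /perron2 /disc; set S := Num.sqrt _ => S2.
apply/eqP; rewrite -subr_eq0; apply/eqP.
have -> : (M 0 0 - a) * (M 1 1 - a) - M 0 1 * M 1 0 -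
   (a - (M 0 0 + M 1 1 + S) / 2) * (a - (M 0 0 + M 1 1 - S) / 2) =
   (S ^+ 2 - ((M 0 0 - M 1 1) ^+ 2 + 4 * (M 0 1 * M 1 0))) / 4 by field.
by rewrite S2 subrr mul0r.
Qed.

Lemma eigenvalue_perron2 : eigenvalue M (perron2 M).
Proof. by rewrite eigenvalue_mx2 -subr_eq0 char_mx2_factor subrr mul0r. Qed.

Lemma eigenvalue_le_perron2 a : eigenvalue M a -> a <= perron2 M.
Proof.
rewrite eigenvalue_mx2 -subr_eq0 char_mx2_factor mulf_eq0 !subr_eq0.
have S0 := sqrtr_ge0 (disc M).
by case/orP => /eqP ->; rewrite ?lexx // ler_pM2r // lerD2l; lra.
Qed.

Lemma perron2_ge_diag : M 1 1 <= perron2 M.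
Proof.
rewrite /perron2 ler_pdivlMr // -subr_ge0.
have -> : (M 0 0 + M 1 1 + Num.sqrt (disc M)) - M 1 1 * 2 =
  Num.sqrt (disc M) - `|M 0 0 - M 1 1| + (`|M 0 0 - M 1 1| + (M 0 0 - M 1 1)) by ring.
rewrite addr_ge0 //; last by have := ler_norm (- (M 0 0 - M 1 1)); rewrite normrN; lra.
rewrite subr_ge0 -sqrtr_sqr ler_wsqrtr // /disc.
by rewrite lerDl mulr_ge0.
Qed.

End Perron2.

Section Spectral.
Context {R : realType} {n : nat}.
Variables (P : 'M[R]_n) (a b : R).
Hypothesis P_idem : P * P = P.

Let Q := 1 - P.

Lemma spectral_exprn k : (a *: P + b *: Q) ^+ k = a ^+ k *: P + b ^+ k *: Q.
Proof.
have QQ : Q * Q = Q by rewrite /Q mulrBl mul1r mulrBr mulr1 P_idem subrr subr0.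
have PQ : P * Q = 0 by rewrite /Q mulrBr mulr1 P_idem subrr.
have QP : Q * P = 0 by rewrite /Q mulrBl mul1r P_idem subrr.
elim: k => [|k IH]; first by rewrite !expr0 !scale1r /Q addrC subrK.
have sAl c (A B : 'M[R]_n) : c *: A * B = c *: (A * B) := esym (scalemxAl c A B).
have sAr c (A B : 'M[R]_n) : A * (c *: B) = c *: (A * B) := esym (scalemxAr c A B).
rewrite exprS IH mulrDl !mulrDr !sAl !sAr !scalerA.
by rewrite P_idem QQ PQ QP !scaler0 addr0 add0r -!exprS.
Qed.

Lemma expmx_spectral : expmx (a *: P + b *: Q) = expR a *: P + expR b *: Q.
Proof.
rewrite /expmx.
have -> : series (fun k : nat => (k`!%:R)^-1 *: (a *: P + b *: Q) ^+ k) =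
    (fun m => series (exp_coeff a) m *: P + series (exp_coeff b) m *: Q).
  apply/funext => m; rewrite /series /= !scaler_suml -big_split /=.
  apply: eq_bigr => k _; rewrite spectral_exprn scalerDr !scalerA /exp_coeff /=.
  by rewrite ![_ * (k`!%:R)^-1]mulrC.
by apply: cvg_lim => //; apply: cvgD; apply: cvgZr_tmp; exact: is_cvg_series_exp_coeff.
Qed.

End Spectral.

Section LinearODE.
Context {R : realType}.

Lemma scalar_linear_ode (f : R -> R) (l t0 : R) : continuous f ->
  (forall t, t0 < t < t0 + 1 -> is_derive t 1 f (l * f t)) ->
  f (t0 + 1) = expR l * f t0.
Proof.
move=> fc fd.
pose g := (expR \o ( *%R (- l))) * f.
have gd t : t \in `]t0, t0 + 1[ -> is_derive t 1 g 0.
  rewrite in_itv /= => ht.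
  have hl : is_derive t 1 ( *%R (- l)) (- l).
    by have := is_deriveZ (- l) (is_derive_id t 1); rewrite /GRing.scale /= mulr1.
  have he : is_derive t 1 (expR \o ( *%R (- l))) (expR (- l * t) * - l).
    exact: is_derive1_comp.
  apply: is_derive_eq; first exact: (is_deriveM he (fd t ht)).
  rewrite /GRing.scale /=; ring.
have gc : {within `[t0, t0 + 1], continuous g}.
  apply: continuous_subspaceT => x; apply: continuousM; last exact: fc.
  apply: continuous_comp; [exact: mulrl_continuous | exact: continuous_expR].
have [t _] := MVT (ltr_pwDr ltr01 (lexx t0)) gd gc.
move/eqP; rewrite mul0r subr_eq0 => /eqP g_const.
have -> : f (t0 + 1) = expR (l * (t0 + 1)) * g (t0 + 1).
  by rewrite /g mulrA -expRD mulNr addrN expR0 mul1r.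
by rewrite g_const /g mulrA -expRD; congr (expR _ * _); ring.
Qed.

Lemma is_derive_mx_entry m n (X : R -> 'M[R]_(m, n)) t i j :
  derivable X t 1 -> is_derive t 1 (fun s => X s i j) ('D_1 X t i j).
Proof.
move=> dX; rewrite derive_mx // mxE.
by apply: derivableP; exact: (derivable_mxP X t 1).1 dX i j.
Qed.

Lemma linear_ode_left_eigen {m n : nat} {M : 'M[R]_n} {L : 'M[R]_(m, n)} {lam}
    {xi : R -> 'cV[R]_n} {t0} :
  L *m M = lam *: L -> continuous xi ->
  (forall t, t0 < t < t0 + 1 -> derivable xi t 1 /\ 'D_1 xi t = M *m xi t) ->
  L *m xi (t0 + 1) = expR lam *: (L *m xi t0).
Proof.
move=> LM xc xd; apply/matrixP => i j; rewrite [RHS]mxE.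
pose f := \sum_(k < n) (fun s => L i k * xi s k j).
have fE s : f s = (L *m xi s) i j by rewrite /f fct_sumE mxE.
rewrite -!fE; apply: scalar_linear_ode => [|t ht].
  apply: (big_ind (fun g : R -> R => continuous g)) => [|g h gc hc|k _].
  - exact: cst_continuous.
  - by move=> y; exact: (continuousD (gc y) (hc y)).
  - move=> y; apply: continuousM; first exact: cst_continuous.
    exact: (continuous_comp (xc y) (@coord_continuous _ _ _ k j (xi y))).
have [dx Dx] := xd t ht.
apply: is_derive_eq; first by apply: is_derive_sum => k; apply: is_deriveZ; exact: is_derive_mx_entry.
have -> : lam * f t = (L *m M *m xi t) i j by rewrite LM -scalemxAl mxE fE.
rewrite -mulmxA -Dx mxE.
by apply: eq_bigr => k _; rewrite /GRing.scale.
Qed.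

Lemma linear_ode_spectral_step n (P : 'M[R]_n) (a b t0 : R)
    (xi : R -> 'cV[R]_n) :
  P * P = P -> continuous xi ->
  (forall t, t0 < t < t0 + 1 ->
     derivable xi t 1 /\ 'D_1 xi t = (a *: P + b *: (1 - P)) *m xi t) ->
  xi (t0 + 1) = expmx (a *: P + b *: (1 - P)) *m xi t0.
Proof.
move=> PP xc xd; rewrite expmx_spectral // mulmxDl -!scalemxAl.
have PM : P *m (a *: P + b *: (1 - P)) = a *: P.
  by rewrite mulmxDr -!scalemxAr [P *m P]PP mulmxBr mulmx1 [P *m P]PP subrr scaler0 addr0.
have QM : (1 - P) *m (a *: P + b *: (1 - P)) = b *: (1 - P).
  rewrite mulmxDr -!scalemxAr mulmxBl mul1mx [P *m P]PP subrr scaler0 add0r.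
  by rewrite mulmxBl mul1mx mulmxBr mulmx1 [P *m P]PP subrr subr0.
rewrite -(linear_ode_left_eigen PM xc xd) -(linear_ode_left_eigen QM xc xd).
by rewrite -mulmxDl [P + _]addrC subrK mul1mx.
Qed.

End LinearODE.

Section Growth.
Context {R : realType}.

Lemma mulrn_subr1_le_exprn (x : R) n : 1 <= x -> n%:R * (x - 1) <= x ^+ n.
Proof.
move=> x1; elim: n => [|n IH]; first by rewrite mul0r expr0.
have xn1 : 1 <= x ^+ n := exprn_ege1 n x1.
rewrite -natr1 mulrDl mul1r exprS.
have : x ^+ n * (x - 1) >= x - 1 by rewrite ler_peMl // subr_ge0.
by rewrite mulrBr mulr1 mulrC; lra.
Qed.

Lemma exprn_cvgy (x : R) : 1 < x -> x ^+ n @[n --> \oo] --> +oo.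
Proof.
move=> x1; apply: (ger_cvgy (f := fun n => n%:R * (x - 1))).
  by apply: nearW => n; apply: mulrn_subr1_le_exprn; rewrite ltW.
have x1' : 0 < x - 1 by rewrite subr_gt0.
apply/cvgryPge => A; near=> n; rewrite -ler_pdivrMr //.
by near: n; exact: nbhs_infty_ger.
Unshelve. all: by end_near.
Qed.

Lemma eucl2_ge_entry0 (v : 'cV[R]_2) : v 0 0 <= eucl2 v.
Proof.
rewrite /eucl2 (le_trans (ler_norm _)) // -sqrtr_sqr ler_wsqrtr //.
by rewrite lerDl sqr_ge0.
Qed.

End Growth.

Section PeriodicSystem.
Context {R : realType}.
Implicit Types (c d : R).

Definition A1_proj d : 'M[R]_2 := mx2 2^-1 d (4 * d)^-1 2^-1.

Lemma A1_proj_idem d : d != 0 -> A1_proj d * A1_proj d = A1_proj d.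
Proof. by move=> d0; rewrite [_ * _]mulmx_mx2; apply: mx2P; rewrite !mxE /=; field. Qed.

Lemma A1_spectral d :
  A1 d = (- 2^-1) *: A1_proj d + (- (3 / 2)) *: (1 - A1_proj d).
Proof. by apply: mx2P; rewrite !mxE /=; set e := (4 * d)^-1; field. Qed.

Lemma A2_A1 c : c != 0 -> A2 c = A1 (4 * c)^-1.
Proof. by move=> c0; apply: mx2P; rewrite !mxE //=; field. Qed.

Lemma eigenvalue_A1 d a : d != 0 ->
  eigenvalue (A1 d) a <-> a = - 2^-1 \/ a = - (3 / 2).
Proof.
move=> d0; rewrite eigenvalue_mx2 !mxE /=.
have -> : d * (4 * d)^-1 = 4^-1 by field.
rewrite -subr_eq0.
have -> : (-1 - a) * (-1 - a) - 4^-1 = (a + 2^-1) * (a + 3 / 2) by field.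
rewrite mulf_eq0 !addr_eq0.
by split => [/orP [] /eqP|[] ->]; [left|right|rewrite eqxx|rewrite eqxx orbT].
Qed.

Lemma expmx_A1 d : d != 0 ->
  expmx (A1 d) = expR (-1) *:
    mx2 (cosh 2^-1) (2 * d * sinh 2^-1) (sinh 2^-1 / (2 * d)) (cosh 2^-1).
Proof.
move=> d0; rewrite A1_spectral expmx_spectral ?A1_proj_idem //.
have e1 : expR (- 2^-1) = expR (-1) * expR 2^-1 :> R.
  by rewrite -expRD; congr expR; field.
have e3 : expR (- (3 / 2)) = expR (-1) * expR (- 2^-1) :> R.
  by rewrite -expRD; congr expR; field.
by apply: mx2P; rewrite !mxE /= e1 e3 /cosh /sinh; field.
Qed.

Lemma linear_ode_step_A1 d (xi : R -> 'cV[R]_2) t0 : d != 0 -> continuous xi ->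
  (forall t, t0 < t < t0 + 1 -> derivable xi t 1 /\ 'D_1 xi t = A1 d *m xi t) ->
  xi (t0 + 1) = expmx (A1 d) *m xi t0.
Proof.
by move=> d0 xc; rewrite A1_spectral; apply: linear_ode_spectral_step; rewrite ?A1_proj_idem.
Qed.

Lemma floor_unit_itv (k : int) (t : R) : k%:~R < t < k%:~R + 1 -> Num.floor t = k.
Proof. by case/andP => kt tk; apply: floor_def; rewrite ltW // intrD. Qed.

Lemma not_int_unit_itv (k : int) (t : R) : k%:~R < t < k%:~R + 1 ->
  forall j : int, t != j%:~R.
Proof.
case/andP => kt tk j; apply/eqP => tj; move: kt tk; rewrite tj -[1]/(1%:~R) -intrD.
by rewrite !ltr_int ltzD1 => kj jk; have := lt_le_trans kj jk; rewrite ltxx.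
Qed.

Lemma Apw_unit c (k : nat) t : k%:R < t < k%:R + 1 ->
  Apw c t = if odd k then A2 c else A1 c.
Proof.
move=> kt; rewrite /Apw (@floor_unit_itv k%:Z) // modz_nat modn2.
by case: (odd k).
Qed.

Lemma is_solution_unit_step c d xi (k : nat) : is_solution c xi -> d != 0 ->
  (forall t, k%:R < t < k%:R + 1 -> Apw c t = A1 d) ->
  xi k.+1%:R = expmx (A1 d) *m xi k%:R.
Proof.
move=> [xc [xd _]] d0 hA; rewrite -natr1; apply: linear_ode_step_A1 => // t kt.
by rewrite -(hA t kt); apply: xd; apply: (@not_int_unit_itv k%:Z).
Qed.

Definition period_mx c := expmx (A2 c) *m expmx (A1 c).

Lemma is_solution_period {c xi} : c != 0 -> is_solution c xi ->
  forall m : nat, xi m.+1.*2%:R = period_mx c *m xi m.*2%:R.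
Proof.
move=> c0 sol m; have c'0 : (4 * c)^-1 != 0 by rewrite invr_eq0 mulf_neq0.
rewrite doubleS (@is_solution_unit_step c (4 * c)^-1) // => [|t /Apw_unit ->].
  rewrite (@is_solution_unit_step c c) -?A2_A1 ?mulmxA // => t /Apw_unit ->.
  by rewrite odd_double.
by rewrite /= odd_double A2_A1.
Qed.

Lemma period_mxE c : c != 0 ->
  period_mx c = expR (-2) *: mx2
    (cosh 2^-1 ^+ 2 + sinh 2^-1 ^+ 2 / (4 * c ^+ 2))
    ((2 * c + (2 * c)^-1) * cosh 2^-1 * sinh 2^-1)
    ((2 * c + (2 * c)^-1) * cosh 2^-1 * sinh 2^-1)
    (cosh 2^-1 ^+ 2 + 4 * c ^+ 2 * sinh 2^-1 ^+ 2).
Proof.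
move=> c0; rewrite /period_mx A2_A1 // !expmx_A1 ?invr_eq0 ?mulf_neq0 //.
rewrite -scalemxAl -scalemxAr scalerA -expRD mulmx_mx2.
have -> : -1 + -1 = -2 :> R by rewrite -opprD.
by apply: mx2P; rewrite !mxE /=; congr (_ * _); field.
Qed.

Lemma cosh_gt0 (x : R) : 0 < cosh x.
Proof. by rewrite /cosh divr_gt0 // addr_gt0 ?expR_gt0. Qed.

Lemma sinh_gt0 (x : R) : 0 < x -> 0 < sinh x.
Proof. by move=> x0; rewrite /sinh divr_gt0 // subr_gt0 ltr_expR gtrN. Qed.

Lemma period_mx_gt0 c : 0 < c -> forall i j, 0 < period_mx c i j.
Proof.
move=> c0 i j; rewrite period_mxE ?gt_eqF // mxE pmulr_rgt0 ?expR_gt0 //.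
have sh : 0 < sinh (2^-1 : R) by rewrite sinh_gt0 // invr_gt0.
move: (cosh_gt0 2^-1) sh; rewrite mxE; move: (cosh _) (sinh _) => C S C0 S0.
by case: (ord2P i) => ->; case: (ord2P j) => -> /=;
  repeat (apply: addr_gt0 || apply: mulr_gt0 || apply: divr_gt0 ||
          apply: exprn_gt0 || rewrite invr_gt0).
Qed.

Lemma period_mx11 c : c != 0 ->
  period_mx c 1 1 = expR (-2) * (cosh 2^-1 ^+ 2 + 4 * c ^+ 2 * sinh 2^-1 ^+ 2).
Proof. by move=> c0; rewrite period_mxE // !mxE. Qed.

End PeriodicSystem.

Theorem mainTheorem1 (R : realType) (c : R) (hc : 0 < c)
  (hcond : cosh (2^-1) ^+ 2 + 4 * c ^+ 2 * sinh (2^-1) ^+ 2 > expR 1 ^+ 2) :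
  (forall t : R,
     0 < Apw c t 0 1 /\ 0 < Apw c t 1 0 /\
     (forall a : R, eigenvalue (Apw c t) a <-> (a = - 2^-1 \/ a = - (3 / 2)))) /\
  let P := expmx (A2 c) *m expmx (A1 c) in
  (forall i j, 0 < P i j) /\
  exists mu : R,
    [/\ eigenvalue P mu, (forall a : R, eigenvalue P a -> a <= mu), 1 < mu &
     forall w : 'cV[R]_2,
       0 < w 0 0 -> 0 < w 1 0 -> P *m w = mu *: w ->
       forall xi : R -> 'cV[R]_2, is_solution c xi -> xi 0 = w ->
         (forall n : nat, (0 < n)%N -> xi (n.*2%:R) = mu ^+ n *: w) /\
         (fun n : nat => eucl2 (xi (n.*2%:R))) @ \oo --> +oo].
Proof.
have c0 : c != 0 by rewrite gt_eqF.
split.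
  move=> t; have [d [d0 ->]] : exists d, 0 < d /\ Apw c t = A1 d.
    rewrite /Apw; case: ifP => _; first by exists c.
    by exists (4 * c)^-1; rewrite A2_A1 // invr_gt0 mulr_gt0.
  by rewrite !mxE /= invr_gt0 mulr_gt0 //; split=> //; split=> // a; apply: eigenvalue_A1; rewrite gt_eqF.
move=> P; have P_gt0 : forall i j, 0 < P i j := period_mx_gt0 c hc.
split=> //; exists (perron2 P).
have offdiag_ge0 : 0 <= P 0 1 * P 1 0 by rewrite mulr_ge0 // ltW.
have mu_gt1 : 1 < perron2 P.
  apply: lt_le_trans (perron2_ge_diag offdiag_ge0).
  rewrite [P 1 1]period_mx11 // -ltr_pdivrMl ?expR_gt0 // -expRN opprK.
  have -> : expR 2 = expR 1 ^+ 2 :> R by rewrite -expRM_natl mulr1.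
  by rewrite mulr1.
split=> //; [exact: eigenvalue_perron2 | exact: eigenvalue_le_perron2 |].
move=> w w0 _ Pw xi sol xi0.
have xi_even n : xi n.*2%:R = perron2 P ^+ n *: w.
  elim: n => [|n IH]; first by rewrite double0 expr0 scale1r.
  by rewrite (is_solution_period c0 sol) IH -scalemxAr Pw scalerA -exprSr.
split=> [n _|]; first exact: xi_even.
apply: (ger_cvgy (f := fun n => perron2 P ^+ n * w 0 0)).
  by apply: nearW => n; rewrite xi_even (le_trans _ (eucl2_ge_entry0 _)) // mxE.
apply/cvgryPge => A; apply: filterS (cvgry_ge (exprn_cvgy _ mu_gt1) (A / w 0 0)).
by move=> n; rewrite ler_pdivrMr.
Qed.
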